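(* Let $m,n\ge 1$ and $k\ge 2$ be integers. The linear map $\psi_{m,k}:V_{m,k}\to\mathbb{R}^N$ is an isomorphism of real vector spaces.
   Context: $mB^n=\{0,1,\ldots,m\}^n$. For an integer $k\ge 2$, a polynomial $P\in\mathbb{R}[x_1,\ldots,x_n]$ is called $(m,k)$-reduced if two conditions hold: $\deg P\le mn+(m+1)(k-1)-1$, and no monomial of $P$ is divisible by $x_{i_1}^{m+1}\cdots x_{i_k}^{m+1}$ for any indices $i_1,\ldots,i_k$ (not necessarily distinct). $V_{m,k}$ is the space of all $(m,k)$-reduced polynomials. $M_k(n)=\binom{n+k-1}{n}$ and $N=\big((m+1)^n-1\big)M_k(n)+M_{k-1}(n)$. The map $\psi_{m,k}$ sends $P\in V_{m,k}$ to the $N$-tuple listing, in a fixed order, two groups of values: - the values at every point of $mB^n\setminus\{\mathbf 0\}$ of all partial derivatives $\partial^{j_1+\cdots+j_n}P/\partial x_1^{j_1}\cdots\partial x_n^{j_n}$ with $j_1+\cdots+j_n<k$; - the values at $\mathbf 0$ of all such partial derivatives with $j_1+\cdots+j_n<k-1$. *)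

From HB Require Import structures.
From mathcomp Require Import all_boot all_order all_algebra.
From mathcomp Require Import reals.
From mathcomp Require Import mpoly.

Set Implicit Arguments.
Unset Strict Implicit.
Unset Printing Implicit Defensive.

Import Order.TTheory GRing.Theory Num.Theory.
Local Open Scope ring_scope.

Section Reduced.
Variables (R : realType) (n m k : nat).

(* The degree bound  m n + (m+1)(k-1) - 1  (natural-number arithmetic;
   for k >= 2 the subtraction is exact). *)
Definition deg_bound : nat := (m * n + m.+1 * (k - 1) - 1)%N.

(* A monomial x^a is divisible by x_{i1}^{m+1} ... x_{ik}^{m+1} for some
   (not necessarily distinct) indices i1..ik. *)
Definition mono_divisible (a : 'X_{1..n}) : Prop :=
  exists s : k.-tuple 'I_n,
    forall i : 'I_n, (count_mem i s * m.+1 <= a i)%N.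

Definition reduced (P : {mpoly R[n]}) : Prop :=
  (forall a, a \in msupp P -> (mdeg a <= deg_bound)%N) /\
  (forall a, a \in msupp P -> ~ mono_divisible a).

Definition point := {ffun 'I_n -> 'I_m.+1}.
Definition origin : point := [ffun => ord0].
Definition realpt (x : point) : 'I_n -> R := fun i => (x i : nat)%:R.

Definition midx := 'X_{1..n < k}.

Definition psi_dom : {set point * midx} :=
  [set t | (t.1 != origin) || (mdeg (bmnm t.2) < k.-1)%N].

Definition psi (P : {mpoly R[n]}) (t : point * midx) : R :=
  (mderivm (bmnm t.2) P).@[realpt t.1].

Definition Mk (kk : nat) : nat := 'C(n + kk - 1, n).
Definition Nsize : nat := (((m.+1 ^ n) - 1) * Mk k + Mk k.-1)%N.

End Reduced.
Arguments psi {R n} m k P t.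
Arguments reduced {R n} m k P.
Arguments psi_dom n m k.
Arguments Nsize n m k.

(** The reduced monomials are exactly the [x^((m+1) j + r)] with [r] in the
    grid [{0..m}^n] and [|j| < k], except that [r = (m,...,m)] is excluded
    when [|j| = k - 1]; exchanging the grid corners [0] and [(m,...,m)] turns
    this exponent set into the index set of [psi], so [dim V_{m,k} = N] and it
    suffices to show that [psi] is onto.  Let [g_i = prod_(a <= m) (x_i - a)],
    which vanishes on the grid, and [G^j = prod_i g_i^(j_i)].  The polynomials
    [G^j x^r] are reduced, [d^j' (G^j x^r)] vanishes on the grid unless
    [j <= j'], and on the grid [d^j (G^j x^r) = f_j x^r] with [f_j] nowhere
    zero.  Hence the matrix of [psi] on these polynomials is block triangular
    with grid Vandermonde diagonal blocks (with the corner [0] removed when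
    [|j| = k - 1]), which are invertible by Lagrange interpolation. *)

From HB Require Import structures.
From mathcomp Require Import all_boot all_order all_algebra.
From mathcomp Require Import reals.
From mathcomp Require Import mpoly.
From mathcomp Require Import zify ring.
Import GRing.Theory Num.Theory.
Local Open Scope ring_scope.

Set Implicit Arguments.
Unset Strict Implicit.
Unset Printing Implicit Defensive.

Lemma mnm_ind_add1 n (P : 'X_{1..n} -> Prop) :
  P 0%MM -> (forall j i, P j -> P (j + U_(i))%MM) -> forall j, P j.
Proof.
move=> P0 PS j; elim: (mdeg j) {-2}j (erefl (mdeg j)) => [|d IH] {}j dj.
  by move/eqP: dj; rewrite mdeg_eq0 => /eqP ->.
have [i ji] : exists i, j i != 0%N.
  apply/existsP; apply: contra_eqT dj => /existsPn j0.
  by rewrite mdegE big1 // => i _; apply/eqP/negPn.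
rewrite -(submK (_ : U_(i) <= j)%MM) ?lep1mP //; apply/PS/IH.
by apply: (@addIn 1%N); rewrite -[in LHS](mdeg1 i) -mdegD submK ?lep1mP // dj addn1.
Qed.

Lemma mnm_lem_mdeg_eq n (a b : 'X_{1..n}) : (a <= b)%MM -> (mdeg b <= mdeg a)%N -> a = b.
Proof.
move=> ab; rewrite -(submK ab) mdegD -[leqRHS]add0n leq_add2r leqn0 mdeg_eq0.
by move=> /eqP ->; rewrite add0m.
Qed.

Lemma sum_count_mem (T : finType) (s : seq T) : (\sum_(i : T) count_mem i s)%N = size s.
Proof.
elim: s => [|x s IH]; first by rewrite big1.
rewrite /= big_split /= IH (bigD1 x) //= eqxx big1 ?addn0 // => i ix.
by rewrite eq_sym (negbTE ix).
Qed.

Section MultinomialSeq.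
Variable n : nat.
Implicit Types (j : 'X_{1..n}).

Definition mnm_seq j : seq 'I_n := flatten [seq nseq (j i) i | i <- enum 'I_n].

Lemma count_mnm_seq j i : count_mem i (mnm_seq j) = j i.
Proof.
rewrite count_flatten -map_comp sumnE big_map big_enum /=.
under eq_bigr do rewrite /= count_nseq.
by rewrite (bigD1 i) //= eqxx mul1n big1 ?addn0 // => l li; rewrite (negbTE li).
Qed.

Lemma size_mnm_seq j : size (mnm_seq j) = mdeg j.
Proof.
by rewrite -sum_count_mem mdegE; apply: eq_bigr => i _; rewrite count_mnm_seq.
Qed.

Definition mdivn j d : 'X_{1..n} := [multinom (j i %/ d)%N | i < n].

End MultinomialSeq.

Section SquareSystem.
Variables (F : fieldType) (T : finType) (D : {pred T}) (A : T -> T -> F).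

Definition sysmx : 'M[F]_#|D| := \matrix_(b, a) A (enum_val a) (enum_val b).

Definition sysrow (c : T -> F) : 'rV[F]_#|D| := \row_b c (enum_val b).

Definition of_sysrow (v : 'rV[F]_#|D|) (j : T) : F :=
  if [pick b | enum_val b == j] is Some b then v 0 b else 0.

Lemma of_sysrowK v : sysrow (of_sysrow v) = v.
Proof.
apply/rowP => b; rewrite mxE /of_sysrow.
by case: pickP => [b' /eqP/enum_val_inj -> // | /(_ b)]; rewrite eqxx.
Qed.

Lemma sysrow_mulE c a :
  (sysrow c *m sysmx) 0 a = \sum_(j in D) A (enum_val a) j * c j.
Proof.
rewrite mxE [RHS]big_enum_val; apply: eq_bigr => b _.
by rewrite !mxE mulrC.
Qed.

Lemma sysrow_eq0 c : (sysrow c == 0) = [forall j in D, c j == 0].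
Proof.
apply/eqP/forall_inP => [c0 j jD | c0].
  apply/eqP; have := congr1 (fun v : 'rV[F]_#|D| => v 0 (enum_rank_in jD j)) c0.
  by rewrite !mxE enum_rankK_in.
by apply/rowP => b; rewrite !mxE; apply/eqP/c0/enum_valP.
Qed.

Lemma sysmx_injP :
  reflect (forall c, {in D, forall i, \sum_(j in D) A i j * c j = 0} ->
                     {in D, forall j, c j = 0})
          (sysmx \in unitmx).
Proof.
rewrite -row_free_unit; apply: (iffP idP) => [free c c0 j jD | inj].
  have : sysrow c *m sysmx = 0 *m sysmx.
    by apply/rowP => a; rewrite sysrow_mulE mul0mx !mxE c0 // enum_valP.
  by move/(row_free_inj free)/eqP; rewrite sysrow_eq0 => /forall_inP/(_ j jD)/eqP.
apply: inj_row_free => v v0; rewrite -[v]of_sysrowK; apply/eqP.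
rewrite sysrow_eq0; apply/forall_inP => j jD; apply/eqP/inj => // i iD.
by rewrite -(enum_rankK_in iD iD) -sysrow_mulE of_sysrowK v0 mxE.
Qed.

Lemma sysmx_surjP :
  reflect (forall f, exists c, {in D, forall i, \sum_(j in D) A i j * c j = f i})
          (sysmx \in unitmx).
Proof.
rewrite -row_full_unit; apply: (iffP idP) => [full f | surj].
  exists (of_sysrow (sysrow f *m pinvmx sysmx)) => i iD.
  rewrite -(enum_rankK_in iD iD) -sysrow_mulE of_sysrowK mulmxKpV ?mxE //.
  exact: submx_full.
apply/row_fullP.
have row_pre b : exists v : 'rV_#|D|, v *m sysmx == delta_mx 0 b.
  have [c hc] := surj (fun i => (enum_rank_in (enum_valP b) i == b)%:R).
  exists (sysrow c); apply/eqP/rowP => a; rewrite sysrow_mulE hc ?enum_valP //.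
  by rewrite !mxE enum_valK_in eq_sym.
exists (\matrix_b xchoose (row_pre b)).
apply/row_matrixP => b; rewrite row_mul rowK (eqP (xchooseP (row_pre b))).
by apply/rowP => a; rewrite !mxE eqxx eq_sym.
Qed.

End SquareSystem.

Section Lagrange.
Variables (F : fieldType) (m : nat) (a : 'I_m.+1 -> F).
Hypothesis a_inj : injective a.

Definition lagrange (i : 'I_m.+1) : {poly F} :=
  (\prod_(j | j != i) (a i - a j))^-1 *: \prod_(j | j != i) ('X - (a j)%:P).

Lemma size_lagrange_prod i : size (\prod_(j | j != i) ('X - (a j)%:P)) = m.+1.
Proof. by rewrite -big_enum size_prod_XsubC -cardE cardC1 card_ord. Qed.

Lemma lagrange_node_prod_neq0 i : \prod_(j | j != i) (a i - a j) != 0.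
Proof. by apply/prodf_neq0 => j ji; rewrite subr_eq0 (inj_eq a_inj) eq_sym. Qed.

Lemma size_lagrange i : (size (lagrange i) <= m.+1)%N.
Proof. by rewrite -(size_lagrange_prod i) size_scale_leq. Qed.

Lemma lagrange_coef_top i : (lagrange i)`_m != 0.
Proof.
have := lead_coef_prod_XsubC (index_enum 'I_m.+1) (predC1 i) a.
rewrite lead_coefE size_lagrange_prod coefZ => ->.
by rewrite mulr1 invr_eq0 lagrange_node_prod_neq0.
Qed.

Lemma horner_lagrange i j : (lagrange i).[a j] = (j == i)%:R.
Proof.
rewrite hornerZ horner_prod (eq_bigr _ (fun l _ => hornerXsubC _ _)).
have [-> | ji] := eqVneq j i; first by rewrite mulVf ?lagrange_node_prod_neq0.
by rewrite [X in _ * X](bigD1 j) //= subrr mul0r mulr0.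
Qed.

End Lagrange.

Section GridVandermonde.
Variables (F : fieldType) (n m : nat) (a : 'I_m.+1 -> F).
Hypothesis a_inj : injective a.
Local Notation point := (point n m).

Definition top_point : point := [ffun => ord_max].

Definition vdm (t r : point) : F := \prod_i a (t i) ^+ r i.

Definition ivdm (r x : point) : F := \prod_i (lagrange a (x i))`_(r i).

Lemma vdm_ivdm t x : \sum_r vdm t r * ivdm r x = (t == x)%:R.
Proof.
under eq_bigr do rewrite -big_split /=.
rewrite -(bigA_distr_bigA (fun i (u : 'I_m.+1) => a (t i) ^+ u * (lagrange a (x i))`_u)).
under eq_bigr => i _.
  under eq_bigr do rewrite mulrC.
  rewrite -(horner_coef_wide _ (size_lagrange a (x i))) horner_lagrange //.
  over.
have [-> | tx] := eqVneq t x; first by rewrite big1 // => i _; rewrite eqxx.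
have [i ti] : exists i, t i != x i.
  by apply/existsP; apply: contraNT tx => /existsPn ti; apply/eqP/ffunP => i; apply/eqP/negPn.
by rewrite (bigD1 i) //= (negbTE ti) mul0r.
Qed.

Lemma vdm_unit : sysmx (mem predT) vdm \in unitmx.
Proof.
apply/sysmx_surjP => f; exists (fun r => \sum_x ivdm r x * f x) => t _.
rewrite (eq_bigl xpredT) //; under eq_bigr do rewrite mulr_sumr.
rewrite exchange_big /=.
under eq_bigr do (under eq_bigr do rewrite mulrA; rewrite -mulr_suml vdm_ivdm).
rewrite (bigD1 t) //= eqxx mul1r big1 ?addr0 // => x xt.
by rewrite eq_sym (negbTE xt) mul0r.
Qed.

Lemma vdm_inj d : (forall t, \sum_r vdm t r * d r = 0) -> forall r, d r = 0.
Proof. by move=> d0 r; apply: (sysmx_injP _ _ vdm_unit) => // t _; apply: d0. Qed.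

Lemma ivdm_top_neq0 x : ivdm top_point x != 0.
Proof. by apply/prodf_neq0 => i _; rewrite ffunE lagrange_coef_top. Qed.

Lemma vdm_inj_except x0 d : d top_point = 0 ->
  (forall t, t != x0 -> \sum_r vdm t r * d r = 0) -> forall r, d r = 0.
Proof.
move=> dtop d0.
(* Without the equation at [x0], [d] is a multiple of the column of the
   inverse matrix at [x0], whose top entry is nonzero. *)
pose v0 := \sum_r vdm x0 r * d r.
have d_ivdm r : d r = v0 * ivdm r x0.
  apply/eqP; rewrite -subr_eq0; apply/eqP; move: r.
  apply: vdm_inj => t; under eq_bigr do rewrite mulrBr mulrCA.
  rewrite sumrB -mulr_sumr vdm_ivdm.
  by have [-> | /d0 ->] := eqVneq t x0; rewrite ?mulr1 ?mulr0 subrr.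
have v00 : v0 = 0.
  apply/eqP; move: dtop; rewrite d_ivdm => /eqP.
  by rewrite mulf_eq0 (negbTE (ivdm_top_neq0 x0)) orbF.
by move=> r; rewrite d_ivdm v00 mul0r.
Qed.

End GridVandermonde.

Section Derivation.
Variables (R : comNzRingType) (n : nat).
Implicit Types (p : {mpoly R[n]}).

Lemma mderiv_prod_eq0 (I : Type) (r : seq I) (P : pred I) (F : I -> {mpoly R[n]}) j :
  (forall x, P x -> (F x)^`M(j) = 0) -> (\prod_(x <- r | P x) F x)^`M(j) = 0.
Proof.
move=> F0; apply: (big_ind (fun p => p^`M(j) = 0)) => //.
  by rewrite -mpolyC1 mderivC.
by move=> p q p0 q0; rewrite mderivM p0 q0 mul0r mulr0 addr0.
Qed.

Lemma mderiv_exprS i p e : (p ^+ e.+1)^`M(i) = e.+1%:R *: (p ^+ e * p^`M(i)).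
Proof.
elim: e => [|e IH]; first by rewrite expr1 expr0 mul1r scale1r.
rewrite exprS mderivM IH -scalerAr mulrA -exprS mulrC.
by rewrite !scaler_nat [RHS]mulrS.
Qed.

Lemma mderiv_XsubC i j (c : R) : ('X_i - c%:MP : {mpoly R[n]})^`M(j) = (i == j)%:R.
Proof.
rewrite mderivB mderivC subr0 mderivX mnm1E.
have [<- | _] := eqVneq i j; last by rewrite scale0r.
by rewrite -[X in (X - _)%MM](add0m (U_(i))%MM) addmK mpolyX0 scale1r.
Qed.

End Derivation.

Section SupportBound.
Variables (R : comNzRingType) (n : nat).
Implicit Types (f g : 'X_{1..n}) (p q : {mpoly R[n]}).

Definition mbounded f p := forall e, e \in msupp p -> (e <= f)%MM.

Lemma mbounded_trans f g p : (f <= g)%MM -> mbounded f p -> mbounded g p.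
Proof. by move=> fg pf e /pf /lepm_trans; apply. Qed.

Lemma mbounded1 : mbounded 0%MM 1.
Proof. by move=> e; rewrite -mpolyC1 msuppC oner_eq0 inE => /eqP ->; apply: lepm_refl. Qed.

Lemma mboundedM f g p q : mbounded f p -> mbounded g q -> mbounded (f + g)%MM (p * q).
Proof.
move=> pf qg e /msuppM_le /allpairsP [[e1 e2] /= [/pf /mnm_lepP le1 /qg /mnm_lepP le2 ->]].
by apply/mnm_lepP => i; rewrite !mnmDE leq_add.
Qed.

Lemma mbounded_prod (I : Type) (r : seq I) (P : pred I) (F : I -> {mpoly R[n]}) b :
  (forall x, P x -> mbounded (b x) (F x)) ->
  mbounded (\big[+%MM/0%MM]_(x <- r | P x) b x) (\prod_(x <- r | P x) F x).
Proof.
move=> Fb; elim/big_rec2: _ => [|x g p Px pg]; first exact: mbounded1.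
exact: mboundedM (Fb x Px) pg.
Qed.

Lemma mbounded_exp f p e : mbounded f p -> mbounded (f *+ e)%MM (p ^+ e).
Proof.
move=> pf; elim: e => [|e IH]; first by rewrite expr0; apply: mbounded1.
by rewrite exprS mulmS; apply: mboundedM.
Qed.

Lemma mboundedX f : mbounded f 'X_[f].
Proof. by move=> e; rewrite msuppX inE => /eqP ->; apply: lepm_refl. Qed.

Lemma mbounded_XsubC i (c : R) : mbounded U_(i)%MM ('X_i - c%:MP).
Proof.
move=> e /msuppB_le; rewrite mem_cat msuppX msuppC inE.
case/orP => [/eqP -> | ]; first exact: lepm_refl.
by case: (c == 0) => //; rewrite inE => /eqP ->; apply/mnm_lepP => l; rewrite mnm0E.
Qed.

End SupportBound.

Section Nodal.
Variables (F : numFieldType) (n m : nat) (a : 'I_m.+1 -> F).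
Hypothesis a_inj : injective a.
Local Notation point := (point n m).

Definition gridpt (t : point) : 'I_n -> F := fun i => a (t i).

Definition nodal (i : 'I_n) : {mpoly F[n]} := \prod_b ('X_i - (a b)%:MP).

Definition nodalm (q : 'X_{1..n}) : {mpoly F[n]} := \prod_i nodal i ^+ q i.

Lemma mbounded_nodalm (q : 'X_{1..n}) : mbounded (q *+ m.+1)%MM (nodalm q).
Proof.
have nodal_bound (i : 'I_n) : mbounded (\big[+%MM/0%MM]_(b < m.+1) U_(i))%MM (nodal i).
  by apply: mbounded_prod => b _; apply: mbounded_XsubC.
apply: mbounded_trans (mbounded_prod (fun i _ => mbounded_exp (e := q i) (nodal_bound i))).
apply/mnm_lepP => l; rewrite mnm_sumE [in leqRHS]mulmnE (bigD1 l) //=.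
rewrite [X in (_ + X)%N]big1 => [|i il].
  rewrite mulmnE mnm_sumE (eq_bigr (fun=> 1%N)) => [|b _]; last by rewrite mnm1E eqxx.
  by rewrite sum1_card card_ord addn0 mulnC.
by rewrite mulmnE mnm_sumE big1 // => b _; rewrite mnm1E (negbTE il).
Qed.

Lemma meval_nodal i t : (nodal i).@[gridpt t] = 0.
Proof. by rewrite rmorph_prod (bigD1 (t i)) //= mevalB mevalC mevalXU subrr mul0r. Qed.

Lemma mderiv_nodal_neq i j : i != j -> (nodal i)^`M(j) = 0.
Proof. by move=> ij; apply: mderiv_prod_eq0 => b _; rewrite mderiv_XsubC (negbTE ij). Qed.

Lemma meval_mderiv_nodal i t : ((nodal i)^`M(i)).@[gridpt t] != 0.
Proof.
rewrite /nodal (bigD1 (t i)) //= mderivM mevalD !mevalM mevalB mevalC mevalXU.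
rewrite subrr mul0r addr0 mderiv_XsubC eqxx meval1 mul1r rmorph_prod.
apply/prodf_neq0 => b tib.
by rewrite /= mevalB mevalC mevalXU subr_eq0 (inj_eq a_inj) eq_sym.
Qed.

Lemma meval_nodalm q t : q != 0%MM -> (nodalm q).@[gridpt t] = 0.
Proof.
move=> q0; have [i qi] : exists i, q i != 0%N.
  apply/existsP; apply: contraNT q0 => /existsPn q0.
  by apply/eqP/mnmP => i; rewrite mnm0E; apply/eqP/negPn.
by rewrite rmorph_prod (bigD1 i) //= rmorphXn /= (meval_nodal i t) expr0n (negbTE qi) mul0r.
Qed.

Lemma nodalm0 : nodalm 0%MM = 1.
Proof. by rewrite /nodalm big1 // => i _; rewrite mnm0E expr0. Qed.

Lemma mderiv_nodalmM i q h : (nodalm q * h)^`M(i) = nodalm (q - U_(i)) *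
  (if (0 < q i)%N then (q i)%:R *: ((nodal i)^`M(i) * h) + nodal i * h^`M(i)
   else h^`M(i)).
Proof.
pose H (q : 'X_{1..n}) := \prod_(l | l != i) nodal l ^+ q l.
have nodalmE (q' : 'X_{1..n}) : nodalm q' = nodal i ^+ q' i * H q'.
  by rewrite /nodalm (bigD1 i).
have H0 : (H q)^`M(i) = 0.
  apply: mderiv_prod_eq0 => l li; case: (q l) => [|e]; first by rewrite expr0 -mpolyC1 mderivC.
  by rewrite mderiv_exprS mderiv_nodal_neq ?mulr0 ?scaler0.
have HB : H (q - U_(i))%MM = H q.
  by apply: eq_bigr => l li; rewrite mnmBE mnm1E eq_sym (negbTE li) subn0.
rewrite !nodalmE HB mnmBE mnm1E eqxx -!mulrA mderivM.
case: (q i) => [|e] /=.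
  by rewrite sub0n !expr0 -mpolyC1 mderivC mul0r add0r mpolyC1 !mul1r mderivM H0 mul0r add0r.
by rewrite subn1 /= mderiv_exprS mderivM H0 mul0r add0r -!mul_mpolyC exprS; ring.
Qed.

Lemma mderivm_nodalmM q j : exists f : point -> F,
  ((j <= q)%MM -> forall t, f t != 0) /\
  forall h, exists2 Q, (nodalm q * h)^`M[j] = nodalm (q - j) * Q &
    (j <= q)%MM -> forall t, Q.@[gridpt t] = f t * h.@[gridpt t].
Proof.
elim/mnm_ind_add1: j => [|j i [f [f0 IH]]].
  exists (fun=> 1); split=> [_ t | h]; first exact: oner_neq0.
  by exists h => [|_ t]; rewrite ?mderivm0m ?subm0 ?mul1r.
pose b := (q - j)%MM i.
have le_jq : (j + U_(i) <= q)%MM -> (j <= q)%MM /\ (0 < b)%N.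
  move=> /mnm_lepP le; split.
    by apply/mnm_lepP => l; apply: leq_trans (le l); rewrite mnmDE leq_addr.
  by have := le i; rewrite /b mnmDE mnm1E eqxx addn1 mnmBE subn_gt0.
exists (fun t => b%:R * ((nodal i)^`M(i)).@[gridpt t] * f t); split.
  move=> /le_jq [jq b0] t.
  by rewrite !mulf_neq0 ?f0 ?meval_mderiv_nodal // pnatr_eq0 -lt0n.
move=> h; have [Q eQ vQ] := IH h.
exists (if (0 < b)%N then b%:R *: ((nodal i)^`M(i) * Q) + nodal i * Q^`M(i) else Q^`M(i)).
  by rewrite mderivmDm mderivmU1m eQ mderiv_nodalmM submDA.
move=> /le_jq [jq ->] t.
by rewrite mevalD mevalZ !mevalM (meval_nodal i t) mul0r addr0 vQ // !mulrA.
Qed.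

Lemma meval_mderivm_nodalmM_eq0 q j h t : ~~ (q <= j)%MM ->
  ((nodalm q * h)^`M[j]).@[gridpt t] = 0.
Proof.
move=> qj; have [f [_ Hq]] := mderivm_nodalmM q j; have [Q -> _] := Hq h.
rewrite mevalM meval_nodalm ?mul0r //; apply: contra qj => /eqP qj0.
apply/mnm_lepP => i; have := congr1 (fun x : 'X_{1..n} => x i) qj0.
by rewrite mnmBE mnm0E => /eqP; rewrite subn_eq0.
Qed.

Lemma meval_mderivm_nodalmM_diag q : exists2 f : point -> F, (forall t, f t != 0) &
  forall h t, ((nodalm q * h)^`M[q]).@[gridpt t] = f t * h.@[gridpt t].
Proof.
have [f [f0 Hq]] := mderivm_nodalmM q q; exists f => [|h t]; first exact: f0 (lepm_refl q).
have [Q -> vQ] := Hq h.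
by rewrite -[X in (X - _)%MM](add0m q) addmK nodalm0 mul1r vQ ?lepm_refl.
Qed.

End Nodal.

Section Encoding.
Variables (n m k : nat).
Local Notation point := (point n m).
Local Notation D := (psi_dom n m k).

Lemma mono_divisibleP (e : 'X_{1..n}) :
  mono_divisible m k e <-> (k <= mdeg (mdivn e m.+1))%N.
Proof.
split => [[s se] | ke].
  rewrite -(size_tuple s) -sum_count_mem mdegE; apply: leq_sum => i _.
  by rewrite mnmE leq_divRL ?se.
set q := mdivn e m.+1; have sz : size (take k (mnm_seq q)) == k.
  by rewrite size_takel // size_mnm_seq.
exists (Tuple sz) => i /=; apply: leq_trans (leq_divM (e i) m.+1).
have -> : (e i %/ m.+1)%N = count_mem i (mnm_seq q) by rewrite count_mnm_seq mnmE.
by rewrite leq_mul2r -[in leqRHS](cat_take_drop k (mnm_seq q)) count_cat leq_addr orbT.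
Qed.

(* [psi_dom] drops the pairs [(0, j)] with [|j| = k - 1], while the degree
   bound drops the exponents [(m+1) j + (m,...,m)] with [|j| = k - 1];
   exchanging the two corners matches them. *)
Definition corner_swap (x : point) : point :=
  if x == origin n m then top_point n m else if x == top_point n m then origin n m else x.

Lemma corner_swapK : involutive corner_swap.
Proof.
move=> x; rewrite /corner_swap.
have [-> | xo] := eqVneq x (origin n m); first by case: eqVneq => [-> | _]; rewrite ?eqxx.
have [-> | xt] := eqVneq x (top_point n m); first by rewrite ?eqxx.
by rewrite (negbTE xo) (negbTE xt).
Qed.

Lemma corner_swap_eq_top x : (corner_swap x == top_point n m) = (x == origin n m).
Proof.
have swap_origin : corner_swap (origin n m) = top_point n m by rewrite /corner_swap eqxx.
by rewrite -swap_origin (inj_eq (can_inj corner_swapK)).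
Qed.

Lemma corner_swap_top : corner_swap (top_point n m) = origin n m.
Proof. by apply/eqP; rewrite -corner_swap_eq_top corner_swapK. Qed.

Definition mnm_of_point (r : point) : 'X_{1..n} := [multinom (r i : nat) | i < n].

Lemma mdeg_mnm_of_point_le r : (mdeg (mnm_of_point r) <= n * m)%N.
Proof.
rewrite mdegE -[n in (_ <= n * _)%N]card_ord -sum_nat_const.
by apply: leq_sum => i _; rewrite mnmE -ltnS.
Qed.

Lemma mdeg_mnm_of_point_lt r : r != top_point n m -> (mdeg (mnm_of_point r) < n * m)%N.
Proof.
move=> rt; have [i ri] : exists i, (r i < m)%N.
  apply/existsP; apply: contraNT rt => /existsPn rm; apply/eqP/ffunP => i.
  by apply/val_inj; rewrite ffunE /=; apply/eqP; rewrite eqn_leq -ltnS ltn_ord leqNgt rm.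
rewrite mdegE -[n in (_ < n * _)%N]card_ord -sum_nat_const.
rewrite (bigD1 i) //= [X in (_ < X)%N](bigD1 i) //=.
rewrite mnmE -addSn leq_add //; apply: leq_sum => l _.
by rewrite mnmE -ltnS.
Qed.

Definition expo (u : point * midx n k) : 'X_{1..n} :=
  (bmnm u.2 *+ m.+1 + mnm_of_point (corner_swap u.1))%MM.

Lemma expo_inj : injective expo.
Proof.
move=> [x1 j1] [x2 j2] /mnmP e12.
have e i : bmnm j1 i = bmnm j2 i /\ (corner_swap x1 i : nat) = corner_swap x2 i.
  have := e12 i; rewrite !mnmDE !mulmnE !mnmE => ei.
  have := congr1 (divn^~ m.+1) ei; have := congr1 (modn^~ m.+1) ei.
  rewrite !modnMDl !divnMDl // !modn_small // !divn_small // !addn0.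
  by move=> -> ->.
congr pair; last by apply/val_inj/mnmP => i; case: (e i).
by apply: (can_inj corner_swapK); apply/ffunP => i; apply/val_inj; case: (e i).
Qed.

Definition reduced_exp (e : 'X_{1..n}) : Prop :=
  (mdeg e <= deg_bound n m k)%N /\ ~ mono_divisible m k e.

Lemma reduced_exp_le u e : u \in D -> (e <= expo u)%MM -> reduced_exp e.
Proof.
case: u => x j; rewrite inE /= => xD le_e; move/mnm_lepP: (le_e) => le_ei.
have r_le i : (corner_swap x i <= m)%N by rewrite -ltnS.
have jk := bmdeg j; split.
  have := lemc_mdeg (lem_leo le_e); rewrite mdegD mdegMn /deg_bound [(m * n)%N]mulnC /= => de.
  case/orP: xD => [xo | jk2].
    have lt : (mdeg (mnm_of_point (corner_swap x)) < n * m)%N.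
      by apply: mdeg_mnm_of_point_lt; rewrite corner_swap_eq_top.
    have : (mdeg j * m.+1 <= m.+1 * (k - 1))%N by rewrite mulnC leq_mul2l; lia.
    lia.
  have le := mdeg_mnm_of_point_le (corner_swap x).
  have : (mdeg j * m.+1 + m.+1 <= m.+1 * (k - 1))%N by rewrite -mulSnr mulnC leq_mul2l; lia.
  lia.
move/mono_divisibleP; apply/negP; rewrite -ltnNge; apply: leq_ltn_trans jk.
apply/lemc_mdeg/lem_leo/mnm_lepP => i; rewrite mnmE -ltnS ltn_divLR // mulSn addnC.
by apply: leq_ltn_trans (le_ei i) _; rewrite mnmDE mulmnE ltn_add2l ltnS mnmE r_le.
Qed.

Lemma reduced_exp_expo e : (1 < k)%N -> reduced_exp e -> exists2 u, u \in D & expo u = e.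
Proof.
move=> k2 [de nd]; set j := mdivn e m.+1.
have jk : (mdeg j < k)%N.
  by rewrite ltnNge; apply/negP => kj; apply/nd/mono_divisibleP.
pose r : point := [ffun i => inord (e i %% m.+1)].
have er : expo (corner_swap r, BMultinom jk) = e.
  apply/mnmP => i.
  by rewrite mnmDE mulmnE corner_swapK /= !mnmE ffunE inordK ?ltn_mod // -divn_eq.
exists (corner_swap r, BMultinom jk) => //; rewrite inE /=.
have [rt | ] := eqVneq r (top_point n m); last by rewrite -corner_swap_eq_top corner_swapK => ->.
apply/orP; right; move: de; rewrite -er mdegD mdegMn /= corner_swapK rt /deg_bound.
have -> : mdeg (mnm_of_point (top_point n m)) = (m * n)%N.
  rewrite mdegE (eq_bigr (fun=> m)) => [|i _]; last by rewrite mnmE ffunE.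
  by rewrite sum_nat_const card_ord mulnC.
have pos : (0 < m.+1 * (k - 1))%N by rewrite muln_gt0 subn_gt0 k2.
move: (mdeg j) => d de; rewrite -(ltn_pmul2r (ltn0Sn m)) -subn1 [(_ * m.+1)%N in leqRHS]mulnC.
by clear -pos de; lia.
Qed.

End Encoding.

Lemma card_bmnm_mdeg_le n b c : (c < b)%N ->
  #|[set j : 'X_{1..n < b} | (mdeg j <= c)%N]| = 'C(n + c, n).
Proof.
move=> cb; rewrite -card_partial_ord_partitions.
pose h (j : 'X_{1..n < b}) : n.-tuple 'I_c.+1 := [tuple inord (bmnm j i) | i < n].
have sum_tuple (t : n.-tuple 'I_c.+1) : (\sum_(i <- t) i = \sum_(i < n) tnth t i)%N.
  by rewrite big_tuple.
have hE (j : 'X_{1..n < b}) : (mdeg j <= c)%N -> forall i, (tnth (h j) i : nat) = bmnm j i.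
  move=> jc i; rewrite tnth_mktuple inordK // ltnS (leq_trans _ jc) //.
  by rewrite mdegE (bigD1 i) //= leq_addr.
rewrite -(card_in_imset (f := h)) => [|j1 j2]; last first.
  rewrite !inE => j1c j2c hj; apply/val_inj/mnmP => i.
  by rewrite -(hE _ j1c) -(hE _ j2c) hj.
apply: eq_card => t; rewrite inE; apply/imsetP/idP => [[j] | tc].
  by rewrite inE => jc ->; rewrite sum_tuple (eq_bigr _ (fun i _ => hE j jc i)) -mdegE.
pose j0 := [multinom (tnth t i : nat) | i < n].
have j0c : (mdeg j0 <= c)%N.
  by rewrite mdegE (eq_bigr _ (fun i _ => mnmE _ i)) -sum_tuple.
exists (BMultinom (leq_ltn_trans j0c cb)); first by rewrite inE.
by apply: eq_from_tnth => i; apply/val_inj => /=; rewrite hE //= mnmE.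
Qed.

Lemma card_psi_dom n m k : (1 < k)%N -> #|psi_dom n m k| = Nsize n m k.
Proof.
case: k => [|[|b]] // _; rewrite /Nsize /Mk !addnS !subn1 /=.
have card_all : (\sum_(j : midx n b.+2) 1)%N = 'C(n + b.+1, n).
  rewrite -(card_bmnm_mdeg_le n (ltnSn b.+1)) -sum1_card [RHS]big_mkcond /=.
  by apply: eq_bigr => j _; rewrite inE -ltnS bmdeg.
have card_small : (\sum_(j : midx n b.+2) (mdeg j < b.+1 : nat))%N = 'C(n + b, n).
  rewrite -(card_bmnm_mdeg_le n (leqW (ltnSn b))) -sum1_card [RHS]big_mkcond /=.
  by apply: eq_bigr => j _; rewrite inE ltnS.
transitivity (\sum_x \sum_(j : midx n b.+2) ((x, j) \in psi_dom n m b.+2 : nat))%N.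
  by rewrite -sum1_card big_mkcond pair_bigA /=; apply: eq_bigr => -[x j] _.
rewrite (bigD1 (origin n m)) //= addnC; congr (_ + _)%N.
  rewrite (eq_bigr (fun=> 'C(n + b.+1, n))) => [|x xo].
    by rewrite sum_nat_const cardC1 card_ffun !card_ord addnS.
  by rewrite -card_all; apply: eq_bigr => j _; rewrite inE /= xo.
by rewrite -card_small; apply: eq_bigr => j _; rewrite inE /= eqxx.
Qed.

Section Psi.
Variables (R : realType) (n m k : nat).
Local Notation point := (point n m).
Local Notation D := (psi_dom n m k).
Local Notation cswap := (@corner_swap n m).

Definition natnode (b : 'I_m.+1) : R := (b : nat)%:R.

Lemma natnode_inj : injective natnode.
Proof. by move=> b c /eqP; rewrite eqr_nat => /eqP/val_inj. Qed.

Lemma psiE (P : {mpoly R[n]}) y (j : midx n k) :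
  psi m k P (y, j) = (P^`M[bmnm j]).@[gridpt natnode y].
Proof. by []. Qed.

Definition basis_poly (u : point * midx n k) : {mpoly R[n]} :=
  nodalm natnode (bmnm u.2) * 'X_[mnm_of_point (cswap u.1)].

Lemma reducedP (P : {mpoly R[n]}) :
  reduced m k P <-> forall e, e \in msupp P -> reduced_exp m k e.
Proof.
split => [[Pdeg Pdiv] e eP | Pe]; first by split; [apply: Pdeg | apply: Pdiv].
by split => e /Pe [].
Qed.

Lemma basis_poly_reduced u : u \in D -> reduced m k (basis_poly u).
Proof.
move=> uD; apply/reducedP => e /(mboundedM (@mbounded_nodalm _ _ _ _ _) (@mboundedX _ _ _)).
exact: reduced_exp_le.
Qed.

Lemma psi_basis_poly_eq0 u v :
  ~~ (bmnm u.2 <= bmnm v.2)%MM -> psi m k (basis_poly u) v = 0.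
Proof. by case: v => y j uj; rewrite psiE (meval_mderivm_nodalmM_eq0 natnode_inj). Qed.

Lemma psi_basis_poly_diag (j : midx n k) : exists2 f : point -> R, (forall y, f y != 0) &
  forall x y, psi m k (basis_poly (x, j)) (y, j) = f y * vdm natnode y (cswap x).
Proof.
have [f f0 fE] := meval_mderivm_nodalmM_diag natnode_inj (bmnm j).
exists f => // x y; rewrite psiE fE mevalX; congr (_ * _).
by apply: eq_bigr => i _; rewrite mnmE.
Qed.

Lemma big_psi_dom_fiber (G : point * midx n k -> R) j :
  \sum_(u in D | u.2 == j) G u =
  \sum_r (if (cswap r, j) \in D then G (cswap r, j) else 0).
Proof.
rewrite big_mkcond /=.
transitivity (\sum_x \sum_j' (if ((x, j') \in D) && (j' == j) then G (x, j') else 0)).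
  by rewrite pair_bigA /=; apply: eq_bigr => -[x j'] _.
rewrite (reindex_inj (can_inj (@corner_swapK n m))) /=; apply: eq_bigr => r _.
rewrite (bigD1 j) //= eqxx andbT big1 ?addr0 // => j' j'j.
by rewrite (negbTE j'j) andbF.
Qed.

Lemma psi_basis_fiber (c : point * midx n k -> R) (j : midx n k) :
  (forall u, u \in D -> c u != 0 -> (mdeg j <= mdeg u.2)%N) ->
  (forall v, v \in D -> \sum_(u in D) psi m k (basis_poly u) v * c u = 0) ->
  forall y, (y, j) \in D ->
  \sum_r vdm natnode y r * (if (cswap r, j) \in D then c (cswap r, j) else 0) = 0.
Proof.
move=> jmin c0 y yD; have [f f0 fE] := psi_basis_poly_diag j.
apply/(mulfI (f0 y)); rewrite mulr0 -[RHS](c0 _ yD) (bigID (fun u => u.2 == j)) /=.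
rewrite [X in _ = _ + X]big1 ?addr0; last first.
  move=> u /andP [uD uj]; have [-> | cu] := eqVneq (c u) 0; first by rewrite mulr0.
  rewrite psi_basis_poly_eq0 ?mul0r //; apply: contra uj => le.
  by apply/eqP/val_inj/mnm_lem_mdeg_eq => //; apply: jmin.
rewrite big_psi_dom_fiber mulr_sumr; apply: eq_bigr => r _.
by case: ifP => _; rewrite ?mulr0 // fE corner_swapK mulrA.
Qed.

Lemma psi_basis_free (c : point * midx n k -> R) :
  (forall v, v \in D -> \sum_(u in D) psi m k (basis_poly u) v * c u = 0) ->
  forall u, u \in D -> c u = 0.
Proof.
move=> c0 u1 u1D; apply/eqP/negPn/negP => cu1.
pose S := [pred u | (u \in D) && (c u != 0)].
case: (arg_minnP (fun u : point * midx n k => mdeg (bmnm u.2)) (_ : S u1)).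
  by rewrite /S /= u1D.
move=> -[x0 j0] /andP [u0D cu0] u0min.
have jmin u : u \in D -> c u != 0 -> (mdeg j0 <= mdeg u.2)%N.
  by move=> uD cu; apply: u0min; rewrite /S /= uD.
have fiber := psi_basis_fiber jmin c0.
pose d r := if (cswap r, j0) \in D then c (cswap r, j0) else 0.
have dx0 : d (cswap x0) = c (x0, j0) by rewrite /d corner_swapK u0D.
case/negP: cu0; apply/eqP; rewrite -dx0; move: (cswap x0).
have [jk | kj] := ltnP (mdeg j0) k.-1.
  by apply: (vdm_inj natnode_inj) => y; apply: fiber; rewrite inE /= jk orbT.
apply: (vdm_inj_except natnode_inj (x0 := origin n m)) => [|y yo].
  by rewrite /d corner_swap_top inE /= eqxx /= ltnNge kj.
by apply: fiber; rewrite inE /= yo.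
Qed.

Lemma reduced0 : reduced m k (0 : {mpoly R[n]}).
Proof. by apply/reducedP => e; rewrite msupp0. Qed.

Lemma reducedZD (c : R) (P Q : {mpoly R[n]}) :
  reduced m k P -> reduced m k Q -> reduced m k (c *: P + Q).
Proof.
move=> /reducedP Pr /reducedP Qr; apply/reducedP => e /msuppD_le.
by rewrite mem_cat => /orP [/msuppZ_le /Pr | /Qr].
Qed.

Lemma psiZD (c : R) (P Q : {mpoly R[n]}) t :
  psi m k (c *: P + Q) t = c * psi m k P t + psi m k Q t.
Proof. by rewrite /psi mderivmD mderivmZ mevalD mevalZ. Qed.

Lemma psi_sum (B : point * midx n k -> {mpoly R[n]}) (c : point * midx n k -> R) t :
  psi m k (\sum_(u in D) c u *: B u) t = \sum_(u in D) psi m k (B u) t * c u.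
Proof.
elim/big_rec2: _ => [|u y P _ <-]; first by rewrite /psi raddf0 meval0.
by rewrite psiZD mulrC.
Qed.

Lemma psi_surj (g : point * midx n k -> R) :
  exists2 P, reduced m k P & forall t, t \in D -> psi m k P t = g t.
Proof.
have : sysmx D (fun v u => psi m k (basis_poly u) v) \in unitmx.
  by apply/sysmx_injP; apply: psi_basis_free.
move=> /sysmx_surjP /(_ g) [c cg]; exists (\sum_(u in D) c u *: basis_poly u).
  elim/big_rec: _ => [|u P uD Pr]; first exact: reduced0.
  by apply: reducedZD => //; apply: basis_poly_reduced.
by move=> t tD; rewrite psi_sum cg.
Qed.

Lemma reduced_expand (P : {mpoly R[n]}) : (1 < k)%N -> reduced m k P ->
  P = \sum_(u in D) P@_(expo u) *: 'X_[expo u].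
Proof.
move=> k2 /reducedP Pr; apply/mpolyP => e; rewrite raddf_sum /=.
under eq_bigr do rewrite mcoeffZ mcoeffX.
have [eP | eP] := boolP (e \in msupp P); last first.
  rewrite (memN_msupp_eq0 eP) big1 // => u _.
  by case: eqP => [-> | _]; rewrite ?mulr0 // (memN_msupp_eq0 eP) mul0r.
have [u uD <-] := reduced_exp_expo k2 (Pr e eP).
rewrite (bigD1 u) //= eqxx mulr1 big1 ?addr0 // => v /andP [_ vu].
by rewrite (inj_eq (@expo_inj n m k)) (negbTE vu) mulr0.
Qed.

Lemma reduced_psi_eq0 (P : {mpoly R[n]}) : (1 < k)%N -> reduced m k P ->
  (forall t, t \in D -> psi m k P t = 0) -> P = 0.
Proof.
move=> k2 Pr P0.
have : sysmx D (fun v u => psi m k ('X_[expo u] : {mpoly R[n]}) v) \in unitmx.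
  apply/sysmx_surjP => g; have [Q Qr Qg] := psi_surj g.
  by exists (fun u => Q@_(expo u)) => t tD; rewrite -psi_sum -reduced_expand ?Qg.
move=> /sysmx_injP PX0; rewrite (reduced_expand k2 Pr) big1 // => u uD.
rewrite (PX0 (fun u => P@_(expo u))) ?scale0r // => t tD.
by rewrite -psi_sum -reduced_expand ?P0.
Qed.

End Psi.

Theorem lemma3p3 (R : realType) (n m k : nat) :
  (1 <= n)%N -> (1 <= m)%N -> (2 <= k)%N ->
  #|psi_dom n m k| = Nsize n m k /\
  (reduced m k (0 : {mpoly R[n]}) /\
   forall (a : R) (P Q : {mpoly R[n]}), reduced m k P -> reduced m k Q ->
     reduced m k (a *: P + Q) /\
     forall t, psi m k (a *: P + Q) t = a * psi m k P t + psi m k Q t) /\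
  (forall g : point n m * midx n k -> R,
     exists! P : {mpoly R[n]},
       reduced m k P /\ forall t, t \in psi_dom n m k -> psi m k P t = g t).
Proof.
move=> _ _ k2; split; first exact: card_psi_dom.
split.
  split=> [|a P Q Pr Qr]; first exact: reduced0.
  by split; [exact: reducedZD | exact: psiZD].
move=> g; have [P Pr Pg] := psi_surj g; exists P; split=> // Q [Qr Qg].
apply/eqP; rewrite -subr_eq0 -scaleN1r addrC; apply/eqP/(reduced_psi_eq0 k2).
  exact: reducedZD Qr Pr.
by move=> t tD; rewrite psiZD Pg // Qg // mulN1r addNr.
Qed.
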